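(* Let $(A,B,s,t,\Delta)$ be a left multiplier bialgebroid whose canonical maps $T_\lambda$ and $T_\rho$ are bijective and such that $s(I^t)A=A=t(I^s)A$. Then it has a unique left counit.
   Context: All algebras are associative complex algebras, not necessarily unital. For an algebra $A$ with $A_A$ non-degenerate, $L(A)$ denotes right $A$-module endomorphisms of $A$ (containing $A$ via left multiplication) and $M(A)=\{T\in L(A):aT\in A\ \forall a\}$. A left multiplier bialgebroid is a tuple $(A,B,s,t,\Delta)$: (i) $A,B$ algebras, $A_A$ non-degenerate and idempotent; (ii) $s\colon B\to M(A)$ homomorphism, $t\colon B\to M(A)$ anti-homomorphism with commuting images, $s,t$ injective, $s(B)A=A=t(B)A$; ${}_BA\otimes A^B$, the quotient of $A\otimes A$ by the span of $s(x)a\otimes b-a\otimes t(x)b$, is non-degenerate as a right module over $A\otimes1$ and $1\otimes A$; (iii) $\Delta$ is an algebra homomorphism into the algebra of endomorphisms $T$ of ${}_BA\otimes A^B$ for which $T(a\otimes1),T(1\otimes b)\in{}_BA\otimes A^B$ exist with $T(a\otimes b)=T(a\otimes1)(1\otimes b)=T(1\otimes b)(a\otimes1)$; (iv) $\Delta(s(x)t(y)as(x')t(y'))=(t(y)\otimes s(x))\Delta(a)(t(y')\otimes s(x'))$; (v) if $\Delta(b)(1\otimes c)=\sum p_i\otimes q_i$ and $\Delta(b)(a\otimes1)=\sum u_j\otimes v_j$ then $\sum\Delta(p_i)(a\otimes1)\otimes q_i=\sum u_j\otimes\Delta(v_j)(1\otimes c)$ in $A^{\otimes3}$ modulo the span of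 $s(x)a\otimes b\otimes c-a\otimes t(x)b\otimes c$ and $a\otimes s(x)b\otimes c-a\otimes b\otimes t(x)c$. Canonical maps: $T_\lambda$ from the quotient of $A\otimes A$ by the span of $t(x)a\otimes b-a\otimes bt(x)$ to ${}_BA\otimes A^B$, $a\otimes b\mapsto\Delta(b)(a\otimes1)$; $T_\rho$ from the quotient of $A\otimes A$ by the span of $as(x)\otimes b-a\otimes s(x)b$ to ${}_BA\otimes A^B$, $a\otimes b\mapsto\Delta(a)(1\otimes b)$. $I^s\subseteq B$ is the span of $\phi(a)$ over $a\in A$ and linear $\phi\colon A\to B$ with $\phi(s(x)a)=x\phi(a)$; $I^t\subseteq B$ is the span of $\psi(a)$ over linear $\psi\colon A\to B$ with $\psi(t(x)a)=\psi(a)x$. A left counit is a linear $\varepsilon\colon A\to B$ with $\varepsilon(s(x)a)=x\varepsilon(a)$, $\varepsilon(t(y)a)=\varepsilon(a)y$, $\sum t(\varepsilon(c_i))d_i=ab$ whenever $T_\rho(a\otimes b)=\sum c_i\otimes d_i$, and $\sum s(\varepsilon(d_i))c_i=ba$ whenever $T_\lambda(a\otimes b)=\sum c_i\otimes d_i$. *)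

From mathcomp Require Import all_boot all_algebra.
From mathcomp Require Import complex Rstruct.
Import GRing.Theory.

Set Implicit Arguments.
Unset Strict Implicit.
Unset Printing Implicit Defensive.

Local Open Scope ring_scope.

Definition CC : fieldType := (Rdefinitions.R)[i].

Definition is_algebra (V : lmodType CC) (m : V -> V -> V) : Prop :=
  [/\ (forall (k : CC) a a' b, m (k *: a + a') b = k *: m a b + m a' b),
      (forall (k : CC) a b b', m a (k *: b + b') = k *: m a b + m a b') &
      (forall a b c, m a (m b c) = m (m a b) c)].

Definition is_linear_map (V W : lmodType CC) (f : V -> W) : Prop :=
  forall (k : CC) a a', f (k *: a + a') = k *: f a + f a'.

(* An element  sum_i a_i (x) b_i  of A (x) A  is represented by the
   formal sum (list of pairs) [:: (a_1,b_1); ...].  A quotient of A (x) A by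
   the span of a family of relations is described by the class [bal] of
   bilinear forms vanishing on that family: two formal sums are equal in the
   quotient iff every such form takes the same value on them (the algebraic
   dual of a vector space separates its points).  Likewise for A (x) A (x) A. *)
Section Tensors.
Variable A : lmodType CC.

Definition ftensor := seq (A * A).
Definition ftensor3 := seq (A * A * A).

Definition bilinear_form (phi : A -> A -> CC) : Prop :=
  (forall (k : CC) a a' b, phi (k *: a + a') b = k * phi a b + phi a' b) /\
  (forall (k : CC) a b b', phi a (k *: b + b') = k * phi a b + phi a b').

Definition trilinear_form (psi : A -> A -> A -> CC) : Prop :=
  [/\ (forall (k : CC) a a' b c,
          psi (k *: a + a') b c = k * psi a b c + psi a' b c),
      (forall (k : CC) a b b' c,
          psi a (k *: b + b') c = k * psi a b c + psi a b' c) &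
      (forall (k : CC) a b c c',
          psi a b (k *: c + c') = k * psi a b c + psi a b c')].

Definition eval2 (phi : A -> A -> CC) (u : ftensor) : CC :=
  \sum_(p <- u) phi p.1 p.2.

Definition eval3 (psi : A -> A -> A -> CC) (u : ftensor3) : CC :=
  \sum_(p <- u) psi p.1.1 p.1.2 p.2.

Definition qeq2 (bal : (A -> A -> CC) -> Prop) (u v : ftensor) : Prop :=
  forall phi, bilinear_form phi -> bal phi -> eval2 phi u = eval2 phi v.

Definition qeq3 (bal : (A -> A -> A -> CC) -> Prop) (u v : ftensor3) : Prop :=
  forall psi, trilinear_form psi -> bal psi -> eval3 psi u = eval3 psi v.

Definition tscale (k : CC) (u : ftensor) : ftensor :=
  [seq (k *: p.1, p.2) | p <- u].

(* right multiplication by a (x) 1 and by 1 (x) b *)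
Definition rmul1 (m : A -> A -> A) (u : ftensor) (a : A) : ftensor :=
  [seq (m p.1 a, p.2) | p <- u].
Definition rmul2 (m : A -> A -> A) (u : ftensor) (b : A) : ftensor :=
  [seq (p.1, m p.2 b) | p <- u].

Definition lmulT (L1 L2 : A -> A) (u : ftensor) : ftensor :=
  [seq (L1 p.1, L2 p.2) | p <- u].

Definition qbijective (eqX eqY : ftensor -> ftensor -> Prop)
    (f : ftensor -> ftensor) : Prop :=
  [/\ (forall u v, eqX u v -> eqY (f u) (f v)),
      (forall u v, eqY (f u) (f v) -> eqX u v) &
      (forall w, exists u, eqY (f u) w)].

End Tensors.

Section Bialgebroid.
Variables (A B : lmodType CC) (mA : A -> A -> A) (mB : B -> B -> B).
(* s(x) in M(A) is given by its left action  a |-> s(x)a  (sL x)  and its right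
   action  a |-> a s(x)  (sR x); likewise for t. *)
Variables (sL sR tL tR : B -> A -> A).
(* Delta: D1 c a = Delta(c)(a (x) 1),  D2 c b = Delta(c)(1 (x) b). *)
Variables (D1 D2 : A -> A -> ftensor A).

(* ( L, R ) is an element of M(A): L in L(A) (right A-module endomorphism of
   A), and for every a, a L  is again in A, namely  R a. *)
Definition in_MA (L R : A -> A) : Prop :=
  [/\ is_linear_map L,
      (forall a b, L (mA a b) = mA (L a) b) &
      (forall a b, mA (R a) b = mA a (L b))].

Definition right_nondegenerate : Prop :=
  forall a, (forall b, mA a b = 0) -> a = 0.
Definition idempotent_alg : Prop :=
  forall a, exists n (b c : 'I_n -> A), a = \sum_(i < n) mA (b i) (c i).

Definition balQ (phi : A -> A -> CC) : Prop :=        (* _B A (x) A^B *)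
  forall x a b, phi (sL x a) b = phi a (tL x b).
Definition bal_lambda (phi : A -> A -> CC) : Prop :=  (* domain of T_lambda *)
  forall x a b, phi (tL x a) b = phi a (tR x b).
Definition bal_rho (phi : A -> A -> CC) : Prop :=     (* domain of T_rho *)
  forall x a b, phi (sR x a) b = phi a (sL x b).
Definition bal3 (psi : A -> A -> A -> CC) : Prop :=
  (forall x a b c, psi (sL x a) b c = psi a (tL x b) c) /\
  (forall x a b c, psi a (sL x b) c = psi a b (tL x c)).

Definition eqQ := qeq2 balQ.
Definition eq_lambda := qeq2 bal_lambda.
Definition eq_rho := qeq2 bal_rho.
Definition eq3 := qeq3 bal3.

(* the endomorphism Delta(c) of _B A (x) A^B, on representatives:
   Delta(c)(sum a_i (x) b_i) = sum Delta(c)(a_i (x) 1)(1 (x) b_i) *)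
Definition Dact (c : A) (u : ftensor A) : ftensor A :=
  flatten [seq rmul2 mA (D1 c p.1) p.2 | p <- u].

Definition T_lambda (u : ftensor A) : ftensor A :=
  flatten [seq D1 p.2 p.1 | p <- u].
Definition T_rho (u : ftensor A) : ftensor A :=
  flatten [seq D2 p.1 p.2 | p <- u].

Record left_multiplier_bialgebroid : Prop := {
  lmb_algA : is_algebra mA;
  lmb_algB : is_algebra mB;
  lmb_nondegA : right_nondegenerate;
  lmb_idemA : idempotent_alg;
  lmb_sM : forall x, in_MA (sL x) (sR x);
  lmb_tM : forall x, in_MA (tL x) (tR x);
  lmb_s_lin : forall (k : CC) x y a, sL (k *: x + y) a = k *: sL x a + sL y a;
  lmb_t_lin : forall (k : CC) x y a, tL (k *: x + y) a = k *: tL x a + tL y a;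
  lmb_s_mul : forall x y a, sL (mB x y) a = sL x (sL y a);
  lmb_t_antimul : forall x y a, tL (mB x y) a = tL y (tL x a);
  lmb_st_comm : forall x y a, sL x (tL y a) = tL y (sL x a);
  lmb_s_inj : forall x y, (forall a, sL x a = sL y a) -> x = y;
  lmb_t_inj : forall x y, (forall a, tL x a = tL y a) -> x = y;
  lmb_sBA : forall a, exists n (x : 'I_n -> B) (b : 'I_n -> A),
              a = \sum_(i < n) sL (x i) (b i);
  lmb_tBA : forall a, exists n (x : 'I_n -> B) (b : 'I_n -> A),
              a = \sum_(i < n) tL (x i) (b i);
  lmb_Q_nondeg1 : forall w, (forall a, eqQ (rmul1 mA w a) [::]) -> eqQ w [::];
  lmb_Q_nondeg2 : forall w, (forall b, eqQ (rmul2 mA w b) [::]) -> eqQ w [::];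
  lmb_D_compat : forall c a b, eqQ (rmul2 mA (D1 c a) b) (rmul1 mA (D2 c b) a);
  lmb_D_welldef : forall c u v, eqQ u v -> eqQ (Dact c u) (Dact c v);
  lmb_D_homog : forall c (k : CC) u, eqQ (Dact c (tscale k u)) (tscale k (Dact c u));
  lmb_D_lin : forall (k : CC) c c' u,
      eqQ (Dact (k *: c + c') u) (tscale k (Dact c u) ++ Dact c' u);
  lmb_D_mul : forall c c' u, eqQ (Dact (mA c c') u) (Dact c (Dact c' u));
  lmb_D_bimod : forall x y x' y' a u,
      eqQ (Dact (sL x (tL y (tR y' (sR x' a)))) u)
          (lmulT (tL y) (sL x) (Dact a (lmulT (tL y') (sL x') u)));
  lmb_coassoc : forall a b c (P U : ftensor A),
      eqQ P (D2 b c) -> eqQ U (D1 b a) ->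
      eq3 (flatten [seq [seq (r.1, r.2, q.2) | r <- D1 q.1 a] | q <- P])
          (flatten [seq [seq (u.1, r.1, r.2) | r <- D2 u.2 c] | u <- U])
}.

Definition in_Is (y : B) : Prop :=
  exists n (phi : 'I_n -> A -> B) (a : 'I_n -> A),
    (forall i, is_linear_map (phi i)) /\
    (forall i x b, phi i (sL x b) = mB x (phi i b)) /\
    y = \sum_(i < n) phi i (a i).
Definition in_It (y : B) : Prop :=
  exists n (psi : 'I_n -> A -> B) (a : 'I_n -> A),
    (forall i, is_linear_map (psi i)) /\
    (forall i x b, psi i (tL x b) = mB (psi i b) x) /\
    y = \sum_(i < n) psi i (a i).

Definition sItA_eq_A : Prop :=
  forall a, exists n (y : 'I_n -> B) (b : 'I_n -> A),
    (forall i, in_It (y i)) /\ a = \sum_(i < n) sL (y i) (b i).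
Definition tIsA_eq_A : Prop :=
  forall a, exists n (y : 'I_n -> B) (b : 'I_n -> A),
    (forall i, in_Is (y i)) /\ a = \sum_(i < n) tL (y i) (b i).

Definition left_counit (eps : A -> B) : Prop :=
  [/\ is_linear_map eps,
      (forall x a, eps (sL x a) = mB x (eps a)),
      (forall y a, eps (tL y a) = mB (eps a) y),
      (forall a b (w : ftensor A), eqQ (T_rho [:: (a, b)]) w ->
          \sum_(q <- w) tL (eps q.1) q.2 = mA a b) &
      (forall a b (w : ftensor A), eqQ (T_lambda [:: (a, b)]) w ->
          \sum_(q <- w) sL (eps q.2) q.1 = mA b a)].

End Bialgebroid.

(* A left counit is forced: it must satisfy [t(eps a) b = E_rho a b] and
   [s(eps b) a = E_lam a b], where [E_rho = m o T_rho^-1] and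
   [E_lam = m^op o T_lambda^-1], so uniqueness follows from injectivity of [t].
   For existence, coassociativity, contracted against suitable balanced maps,
   gives [s(psi(E_rho y e)) x = s(psi e) (E_lam x y)] for every [psi] of the
   kind defining [I^t], and [t(phi x) (E_rho y e) = t(phi (E_lam x y)) e] for
   every [phi] of the kind defining [I^s].  With [s(I^t)A = A] the first shows
   that [x |-> E_lam x y] is left multiplication by some [s(eps y)]; with
   [t(I^s)A = A] the second then shows [E_rho y q = t(eps y) q]. *)

From Pilot Require Import Defs.
From mathcomp Require Import all_boot all_algebra.
From mathcomp Require Import complex Rstruct.
From mathcomp Require Import boolp classical_sets.
Import GRing.Theory.

Set Implicit Arguments.
Unset Strict Implicit.
Unset Printing Implicit Defensive.

Local Open Scope ring_scope.

Section LinearMap.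
Variables (V W : lmodType CC) (f : V -> W).
Hypothesis f_lin : is_linear_map f.

Lemma lmap0 : f 0 = 0.
Proof.
have := f_lin 1 0 0; rewrite !scale1r addr0 => f0.
by apply: (addrI (f 0)); rewrite -f0 addr0.
Qed.

Lemma lmapD a b : f (a + b) = f a + f b.
Proof. by have := f_lin 1 a b; rewrite !scale1r. Qed.

Lemma lmapZ k a : f (k *: a) = k *: f a.
Proof. by have := f_lin k a 0; rewrite !addr0 lmap0 addr0. Qed.

Lemma lmapB a b : f (a - b) = f a - f b.
Proof. by rewrite lmapD -scaleN1r lmapZ scaleN1r. Qed.

Lemma lmap_sum (I : Type) (r : seq I) (F : I -> V) :
  f (\sum_(i <- r) F i) = \sum_(i <- r) f (F i).
Proof. exact: (big_morph f lmapD lmap0). Qed.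

End LinearMap.

Section Separation.
Variable V : lmodType CC.
Local Open Scope classical_set_scope.

Definition subspace_avoiding (v : V) (X : set V) : Prop :=
  (forall k a b, X a -> X b -> X (k *: a + b)) /\ ~ X v.

Lemma maximal_subspace_avoiding (v : V) : v != 0 ->
  exists W, subspace_avoiding v W /\
            forall X, W `<` X -> ~ subspace_avoiding v X.
Proof.
move=> v_neq0; apply: Zorn_bigcup => F FP Ftot; split.
  move=> k a b [X FX Xa] [Y FY Yb].
  have [XY|YX] := Ftot _ _ FX FY.
    by exists Y => //; apply: (FP _ FY).1 => //; exact: XY.
  by exists X => //; apply: (FP _ FX).1 => //; exact: YX.
by move=> [X FX Xv]; exact: (FP _ FX).2.
Qed.

Section MaximalSubspace.
Variables (v : V) (W : set V).
Hypothesis v_neq0 : v != 0.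
Hypothesis W_avoid : subspace_avoiding v W.
Hypothesis W_max : forall X, W `<` X -> ~ subspace_avoiding v X.

Let W_comb := W_avoid.1.

Lemma max_subspace0 : W 0.
Proof.
apply: contrapT => W0; apply: (W_max (X := [set 0])); last first.
  split; first by move=> k a b -> ->; rewrite scaler0 addr0.
  by move=> /= ev; move: v_neq0; rewrite -ev eqxx.
split=> [x Wx|/(_ 0 erefl)//]; exfalso; apply: W0.
by have := W_comb (-1) Wx Wx; rewrite scaleN1r addNr.
Qed.

Lemma max_subspaceZ k a : W a -> W (k *: a).
Proof. by move=> Wa; rewrite -[_ *: a]addr0; apply: W_comb max_subspace0. Qed.

Lemma max_subspaceD a b : W a -> W b -> W (a + b).
Proof. by move=> Wa Wb; rewrite -[a]scale1r; apply: W_comb. Qed.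

Lemma max_subspaceN a : W a -> W (- a).
Proof. by rewrite -scaleN1r; apply: max_subspaceZ. Qed.

(* Maximality forces [W + C u] to contain [v] when [u] is not in [W],
   so [W] has codimension one with complement [C v]. *)
Lemma max_subspace_complement u : exists c, W (u - c *: v).
Proof.
have [Wu|Wu] := pselect (W u); first by exists 0; rewrite scale0r subr0.
pose Wu' := [set x | exists w k, W w /\ x = w + k *: u].
have W_Wu : W `<` Wu'.
  split; first by move=> x Wx; exists x, 0; rewrite scale0r addr0.
  move=> /(_ u) Wu'_u; apply: Wu; apply: Wu'_u; exists 0, 1.
  by rewrite scale1r add0r; split=> //; exact: max_subspace0.
case/not_andP: (W_max W_Wu) => [Wu_not_comb | /contrapT [w [k [Ww v_eq]]]].
  exfalso; apply: Wu_not_comb => k a b [w1 [k1 [W1 ->]]] [w2 [k2 [W2 ->]]].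
  exists (k *: w1 + w2), (k * k1 + k2); split; first exact: W_comb.
  by rewrite scalerDr scalerDl scalerA addrACA.
have k_neq0 : k != 0.
  by apply/eqP => k0; apply: W_avoid.2; rewrite v_eq k0 scale0r addr0.
exists k^-1; rewrite v_eq scalerDr scalerA mulVf // scale1r opprD addrCA subrr addr0.
exact/max_subspaceN/max_subspaceZ.
Qed.

Lemma max_subspace_complement_uniq u c c' :
  W (u - c *: v) -> W (u - c' *: v) -> c = c'.
Proof.
move=> Wc Wc'; apply: contrapT => /eqP c_neq_c'; apply: W_avoid.2.
have := max_subspaceZ (c - c')^-1 (max_subspaceD Wc' (max_subspaceN Wc)).
have -> : u - c' *: v + - (u - c *: v) = (c - c') *: v.
  by rewrite scalerBl opprB addrC addrA subrK.
by rewrite scalerA mulVf ?scale1r // subr_eq0.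
Qed.

Lemma exists_functional_max_subspace :
  exists f : V -> CC, is_linear_map f /\ f v = 1.
Proof.
pose f u := projT1 (cid (max_subspace_complement u)).
have fP u : W (u - f u *: v) := projT2 (cid (max_subspace_complement u)).
exists f; split.
  move=> k a a'; apply: (max_subspace_complement_uniq (fP _)).
  have := max_subspaceD (max_subspaceZ k (fP a)) (fP a').
  by rewrite scalerBr scalerDl scalerA addrACA opprD.
by apply: max_subspace_complement_uniq (fP v) _; rewrite scale1r subrr; exact: max_subspace0.
Qed.

End MaximalSubspace.

Lemma functionals_separate (v : V) :
  (forall f : V -> CC, is_linear_map f -> f v = 0) -> v = 0.
Proof.
move=> f_v; apply/eqP; apply: contrapT => /negP v_neq0.
have [W [W_avoid W_max]] := maximal_subspace_avoiding v_neq0.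
have [f [f_lin fv1]] := exists_functional_max_subspace v_neq0 W_avoid W_max.
by move/eqP: (f_v f f_lin); rewrite fv1 oner_eq0.
Qed.

End Separation.

Section Tensors.
Variable A : lmodType CC.

Definition tsum (V : lmodType CC) (G : A -> A -> V) (u : ftensor A) : V :=
  \sum_(p <- u) G p.1 p.2.
Definition tsum3 (V : lmodType CC) (G : A -> A -> A -> V) (u : ftensor3 A) : V :=
  \sum_(p <- u) G p.1.1 p.1.2 p.2.

Definition bilinear_map (V : lmodType CC) (G : A -> A -> V) : Prop :=
  (forall (k : CC) a a' b, G (k *: a + a') b = k *: G a b + G a' b) /\
  (forall (k : CC) a b b', G a (k *: b + b') = k *: G a b + G a b').
Definition trilinear_map (V : lmodType CC) (G : A -> A -> A -> V) : Prop :=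
  [/\ (forall (k : CC) a a' b c, G (k *: a + a') b c = k *: G a b c + G a' b c),
      (forall (k : CC) a b b' c, G a (k *: b + b') c = k *: G a b c + G a b' c) &
      (forall (k : CC) a b c c', G a b (k *: c + c') = k *: G a b c + G a b c')].

Section TensorSum.
Variables (V : lmodType CC) (G : A -> A -> V).

Lemma tsum_cat u v : tsum G (u ++ v) = tsum G u + tsum G v.
Proof. exact: big_cat. Qed.

Lemma tsum_nil : tsum G [::] = 0.
Proof. exact: big_nil. Qed.

Lemma tsum1 a b : tsum G [:: (a, b)] = G a b.
Proof. by rewrite /tsum big_cons big_nil addr0. Qed.

Lemma tsum_flatten (s : seq (ftensor A)) : tsum G (flatten s) = \sum_(w <- s) tsum G w.
Proof. exact: big_flatten. Qed.

Lemma tsum_tscale k u : bilinear_map G -> tsum G (tscale k u) = k *: tsum G u.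
Proof.
move=> [G_linl _]; rewrite /tsum big_map scaler_sumr; apply: eq_bigr => p _ /=.
by apply: (lmapZ (f := G^~ p.2)) => k' a a'; exact: G_linl.
Qed.

(* An identity in a quotient of [A (x) A] transfers to every balanced bilinear
   map, because linear functionals separate the points of [V]. *)
Lemma qeq2_tsum bal u v : bilinear_map G ->
  (forall f : V -> CC, is_linear_map f -> bal (fun a b => f (G a b))) ->
  qeq2 bal u v -> tsum G u = tsum G v.
Proof.
move=> [G_linl G_linr] G_bal uv; apply/eqP; rewrite -subr_eq0; apply/eqP.
apply: functionals_separate => f f_lin.
rewrite (lmapB f_lin) /tsum !(lmap_sum f_lin).
have phi_bil : bilinear_form (fun a b => f (G a b)).
  by split=> k *; [rewrite G_linl f_lin | rewrite G_linr f_lin].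
by have := uv _ phi_bil (G_bal f f_lin); rewrite /eval2 => ->; rewrite subrr.
Qed.

End TensorSum.

Lemma qeq3_tsum (V : lmodType CC) (G : A -> A -> A -> V) bal u v :
  trilinear_map G ->
  (forall f : V -> CC, is_linear_map f -> bal (fun a b c => f (G a b c))) ->
  qeq3 bal u v -> tsum3 G u = tsum3 G v.
Proof.
move=> [G1 G2 G3] G_bal uv; apply/eqP; rewrite -subr_eq0; apply/eqP.
apply: functionals_separate => f f_lin.
rewrite (lmapB f_lin) /tsum3 !(lmap_sum f_lin).
have psi_tril : trilinear_form (fun a b c => f (G a b c)).
  by split=> k *; rewrite ?G1 ?G2 ?G3 f_lin.
by have := uv _ psi_tril (G_bal f f_lin); rewrite /eval3 => ->; rewrite subrr.
Qed.

Lemma eval2_cat (phi : A -> A -> CC) u v : eval2 phi (u ++ v) = eval2 phi u + eval2 phi v.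
Proof. exact: big_cat. Qed.

Lemma eval2_nil (phi : A -> A -> CC) : eval2 phi [::] = 0.
Proof. exact: big_nil. Qed.

Lemma eval2_map (phi : A -> A -> CC) (f : A * A -> A * A) u :
  eval2 phi (map f u) = eval2 (fun a b => phi (f (a, b)).1 (f (a, b)).2) u.
Proof. by rewrite /eval2 big_map; apply: eq_bigr => -[]. Qed.

Lemma bilinear_formZ (phi : A -> A -> CC) k a b :
  bilinear_form phi -> phi (k *: a) b = k * phi a b.
Proof. by move=> [phi_linl _]; apply: (lmapZ (f := phi^~ b)) => k' a' a''; exact: phi_linl. Qed.

Lemma eval2_tscale (phi : A -> A -> CC) k u :
  bilinear_form phi -> eval2 phi (tscale k u) = k * eval2 phi u.
Proof.
move=> phi_bil; rewrite /eval2 /tscale big_map mulr_sumr.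
by apply: eq_bigr => p _; exact: bilinear_formZ.
Qed.

Section QuotientEquality.
Variable bal : (A -> A -> CC) -> Prop.
Local Notation "u ~~ v" := (qeq2 bal u v) (at level 70).

Lemma qeq2_refl u : u ~~ u.
Proof. by []. Qed.

Lemma qeq2_sym u v : u ~~ v -> v ~~ u.
Proof. by move=> uv phi phi_bil phi_bal; rewrite uv. Qed.

Lemma qeq2_trans u v w : u ~~ v -> v ~~ w -> u ~~ w.
Proof. by move=> uv vw phi phi_bil phi_bal; rewrite uv // vw. Qed.

Lemma qeq2_cat u u' v v' : u ~~ u' -> v ~~ v' -> u ++ v ~~ u' ++ v'.
Proof. by move=> uu' vv' phi phi_bil phi_bal; rewrite !eval2_cat uu' // vv'. Qed.

Lemma qeq2_flatten (X : Type) (F G : X -> ftensor A) s :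
  (forall x, F x ~~ G x) -> flatten (map F s) ~~ flatten (map G s).
Proof. by move=> FG; elim: s => [|x s IHs] //=; exact: qeq2_cat. Qed.

Lemma qeq2_tscale k u v : u ~~ v -> tscale k u ~~ tscale k v.
Proof. by move=> uv phi phi_bil phi_bal; rewrite !eval2_tscale // uv. Qed.

Lemma qeq2_tscale1 u : tscale 1 u ~~ u.
Proof. by move=> phi phi_bil _; rewrite eval2_tscale // mul1r. Qed.

Lemma qeq2_map (f : A * A -> A * A) u v :
  (forall phi, bilinear_form phi -> bal phi ->
     let phi_f a b := phi (f (a, b)).1 (f (a, b)).2 in
     bilinear_form phi_f /\ bal phi_f) ->
  u ~~ v -> map f u ~~ map f v.
Proof.
move=> f_bal uv phi phi_bil phi_bal; rewrite !eval2_map.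
by have [? ?] := f_bal phi phi_bil phi_bal; exact: uv.
Qed.

Lemma qeq2_linl k a a' b : [:: (k *: a + a', b)] ~~ tscale k [:: (a, b)] ++ [:: (a', b)].
Proof.
move=> phi phi_bil _; rewrite /eval2 /= !big_cons !big_nil /= !addr0.
by rewrite phi_bil.1 bilinear_formZ.
Qed.

Lemma qeq2_linr k a b b' : [:: (a, k *: b + b')] ~~ tscale k [:: (a, b)] ++ [:: (a, b')].
Proof.
move=> phi phi_bil _; rewrite /eval2 /= !big_cons !big_nil /= !addr0.
by rewrite phi_bil.2 bilinear_formZ.
Qed.

Lemma qeq2_nil_of_cat_self u : u ~~ u ++ u -> u ~~ [::].
Proof.
move=> uu phi phi_bil phi_bal; have := uu phi phi_bil phi_bal.
rewrite eval2_cat eval2_nil => uu2.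
by apply: (addrI (eval2 phi u)); rewrite addr0 -uu2.
Qed.

Lemma qeq2_of_diff_nil u v : u ++ tscale (-1) v ~~ [::] -> u ~~ v.
Proof.
move=> uv phi phi_bil phi_bal; have := uv phi phi_bil phi_bal.
rewrite eval2_cat eval2_nil eval2_tscale // mulN1r.
by move/eqP; rewrite subr_eq0 => /eqP.
Qed.

Definition qlinear (F : A -> ftensor A) : Prop :=
  forall k x y, F (k *: x + y) ~~ tscale k (F x) ++ F y.

Section QLinear.
Variable F : A -> ftensor A.
Hypothesis F_qlin : qlinear F.

Lemma qlinear0 : F 0 ~~ [::].
Proof.
apply: qeq2_nil_of_cat_self; apply: (qeq2_trans (v := tscale 1 (F 0) ++ F 0)).
  by have := F_qlin 1 0 0; rewrite scale1r addr0.
by apply: qeq2_cat => //; exact: qeq2_tscale1.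
Qed.

Lemma qlinearZ k x : F (k *: x) ~~ tscale k (F x).
Proof.
apply: (qeq2_trans (v := tscale k (F x) ++ [::])); last by rewrite cats0.
have := F_qlin k x 0; rewrite addr0 => /qeq2_trans; apply.
by apply: qeq2_cat => //; exact: qlinear0.
Qed.

Lemma qlinearD x y : F (x + y) ~~ F x ++ F y.
Proof.
have := F_qlin 1 x y; rewrite scale1r => /qeq2_trans; apply.
by apply: qeq2_cat => //; exact: qeq2_tscale1.
Qed.

End QLinear.
End QuotientEquality.
End Tensors.

Section Bialgebroid.
Variables (A B : lmodType CC) (mA : A -> A -> A) (mB : B -> B -> B).
Variables (sL sR tL tR : B -> A -> A) (D1 D2 : A -> A -> ftensor A).
Hypothesis H : left_multiplier_bialgebroid mA mB sL sR tL tR D1 D2.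

Local Notation "u ~~ v" := (eqQ sL tL u v) (at level 70).
Local Notation Dact := (Dact mA D1).
Local Notation rmul1 := (rmul1 mA).
Local Notation rmul2 := (rmul2 mA).

Lemma mul_linl b : is_linear_map (mA^~ b).
Proof. by case: (lmb_algA H) => mA_linl _ _ k a a'; rewrite mA_linl. Qed.
Lemma mul_linr a : is_linear_map (mA a).
Proof. by case: (lmb_algA H) => _ mA_linr _ k b b'; rewrite mA_linr. Qed.

Lemma mul_bilinear : bilinear_map mA.
Proof. by split=> k *; [rewrite (mul_linl _) | rewrite (mul_linr _)]. Qed.
Lemma mulop_bilinear : bilinear_map (fun a b => mA b a).
Proof. by split=> k *; [rewrite (mul_linr _) | rewrite (mul_linl _)]. Qed.

Lemma sL_lin x : is_linear_map (sL x). Proof. by case: (lmb_sM H x). Qed.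
Lemma tL_lin x : is_linear_map (tL x). Proof. by case: (lmb_tM H x). Qed.
Lemma sL_linB a : is_linear_map (sL^~ a). Proof. by move=> k x y; rewrite (lmb_s_lin H). Qed.
Lemma tL_linB a : is_linear_map (tL^~ a). Proof. by move=> k x y; rewrite (lmb_t_lin H). Qed.
Lemma sL_mul x a b : sL x (mA a b) = mA (sL x a) b. Proof. by case: (lmb_sM H x). Qed.
Lemma tL_mul x a b : tL x (mA a b) = mA (tL x a) b. Proof. by case: (lmb_tM H x). Qed.
Lemma sR_mul x a b : mA (sR x a) b = mA a (sL x b). Proof. by case: (lmb_sM H x). Qed.
Lemma tR_mul x a b : mA (tR x a) b = mA a (tL x b). Proof. by case: (lmb_tM H x). Qed.
Lemma sL_mulB x y a : sL (mB x y) a = sL x (sL y a). Proof. exact: (lmb_s_mul H). Qed.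
Lemma tL_mulB x y a : tL (mB x y) a = tL y (tL x a). Proof. exact: (lmb_t_antimul H). Qed.
Lemma sL_tL x y a : sL x (tL y a) = tL y (sL x a). Proof. exact: (lmb_st_comm H). Qed.

Lemma eqQ_sL_tL x a b : [:: (sL x a, b)] ~~ [:: (a, tL x b)].
Proof. by move=> phi _ phi_bal; rewrite /eval2 !big_cons !big_nil /= phi_bal. Qed.

Lemma eqQ_lmulT (L1 L2 : A -> A) u v :
  is_linear_map L1 -> is_linear_map L2 ->
  (forall x a, L1 (sL x a) = sL x (L1 a)) -> (forall x b, L2 (tL x b) = tL x (L2 b)) ->
  u ~~ v -> lmulT L1 L2 u ~~ lmulT L1 L2 v.
Proof.
move=> L1_lin L2_lin L1_sL L2_tL; apply: qeq2_map => phi [phi_l phi_r] phi_bal /=.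
split; first split.
- by move=> k p p' q; rewrite L1_lin phi_l.
- by move=> k p q q'; rewrite L2_lin phi_r.
- by move=> x p q; rewrite L1_sL L2_tL phi_bal.
Qed.

Lemma eqQ_lmulT_tL y u v : u ~~ v -> lmulT (tL y) id u ~~ lmulT (tL y) id v.
Proof. by apply: eqQ_lmulT => // [|x a]; [exact: tL_lin | rewrite sL_tL]. Qed.

Lemma eqQ_lmulT_sL x u v : u ~~ v -> lmulT id (sL x) u ~~ lmulT id (sL x) v.
Proof. by apply: eqQ_lmulT => // [|x' a]; [exact: sL_lin | rewrite sL_tL]. Qed.

Lemma eqQ_rmul1_tscale k u a : rmul1 (tscale k u) a ~~ tscale k (rmul1 u a).
Proof.
move=> phi _ _; rewrite /eval2 /Defs.rmul1 /tscale !big_map.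
by apply: eq_bigr => p _ /=; rewrite (lmapZ (mul_linl a)).
Qed.

Lemma eqQ_rmul1_linr u k a a' : rmul1 u (k *: a + a') ~~ tscale k (rmul1 u a) ++ rmul1 u a'.
Proof.
move=> phi phi_bil _; rewrite eval2_cat /eval2 /tscale /Defs.rmul1 !big_map -big_split.
by apply: eq_bigr => p _ /=; rewrite (mul_linr p.1) phi_bil.1 (bilinear_formZ _ _ _ phi_bil).
Qed.

Lemma rmul2_tscale k u a : rmul2 (tscale k u) a = tscale k (rmul2 u a).
Proof. by rewrite /Defs.rmul2 /tscale -!map_comp. Qed.

Lemma Dact1 c a b : Dact c [:: (a, b)] = rmul2 (D1 c a) b.
Proof. by rewrite /Defs.Dact /= cats0. Qed.

Lemma D1_D2_compat c a b : rmul2 (D1 c a) b ~~ rmul1 (D2 c b) a.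
Proof. exact: (lmb_D_compat H). Qed.

Lemma Dact_qlinear u : qlinear (balQ sL tL) (Dact^~ u).
Proof. by move=> k c c'; exact: (lmb_D_lin H). Qed.

Lemma eqQ_rmul1_cancel u v : (forall a, rmul1 u a ~~ rmul1 v a) -> u ~~ v.
Proof.
move=> uv; apply: qeq2_of_diff_nil; apply: (lmb_Q_nondeg1 H) => a phi phi_bil phi_bal.
rewrite /Defs.rmul1 map_cat -/(rmul1 _ a) -/(rmul1 _ a) eval2_cat.
rewrite (eqQ_rmul1_tscale (-1) v a phi_bil phi_bal) eval2_tscale // (uv a phi phi_bil phi_bal).
by rewrite mulN1r subrr eval2_nil.
Qed.

Lemma eqQ_rmul2_cancel u v : (forall b, rmul2 u b ~~ rmul2 v b) -> u ~~ v.
Proof.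
move=> uv; apply: qeq2_of_diff_nil; apply: (lmb_Q_nondeg2 H) => b phi phi_bil phi_bal.
rewrite /Defs.rmul2 map_cat -/(rmul2 _ b) -/(rmul2 _ b) rmul2_tscale eval2_cat.
rewrite eval2_tscale // (uv b phi phi_bil phi_bal).
by rewrite mulN1r subrr eval2_nil.
Qed.

Lemma D2_qlinearl b : qlinear (balQ sL tL) (D2^~ b).
Proof.
move=> k c c'; apply: eqQ_rmul1_cancel => a.
apply: (qeq2_trans (qeq2_sym (D1_D2_compat _ _ _))); rewrite -Dact1.
apply: (qeq2_trans (Dact_qlinear _ _ _ _)); rewrite !Dact1 /Defs.rmul1 map_cat.
apply: qeq2_cat; last exact: D1_D2_compat.
apply: (qeq2_trans (v := tscale k (rmul1 (D2 c b) a))).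
  exact/qeq2_tscale/D1_D2_compat.
exact/qeq2_sym/eqQ_rmul1_tscale.
Qed.

Lemma D1_qlinearl a : qlinear (balQ sL tL) (D1^~ a).
Proof.
move=> k c c'; apply: eqQ_rmul2_cancel => b; rewrite -Dact1.
by apply: (qeq2_trans (Dact_qlinear _ _ _ _)); rewrite !Dact1 /Defs.rmul2 map_cat -rmul2_tscale.
Qed.

Lemma D1_qlinearr c : qlinear (balQ sL tL) (D1 c).
Proof.
move=> k a a'; apply: eqQ_rmul2_cancel => b.
apply: (qeq2_trans (D1_D2_compat _ _ _)); apply: (qeq2_trans (eqQ_rmul1_linr _ _ _ _)).
rewrite /Defs.rmul2 map_cat -/(rmul2 _ b) -/(rmul2 _ b) rmul2_tscale.
by apply: qeq2_cat; [apply: qeq2_tscale|]; apply: qeq2_sym; exact: D1_D2_compat.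
Qed.

(* Write [c] as [s(x)t(y)(d e)] using [A = s(B)A = t(B)A = A^2], then expand
   [e] along [s(B)A] and [t(B)A] and move those multipliers onto [d]. *)
Lemma generator_ind (P : A -> Prop) :
  P 0 -> (forall a b, P a -> P b -> P (a + b)) ->
  (forall x y y' x' d g, P (mA (sL x (tL y (tR y' (sR x' d)))) g)) ->
  forall c, P c.
Proof.
move=> P0 PD Pgen.
have P_sum n (F : 'I_n -> A) : (forall i, P (F i)) -> P (\sum_(i < n) F i).
  by move=> PF; apply: (big_ind P) => // i _.
have P_stt x y x' d f : P (sL x (tL y (mA (sR x' d) f))).
  have [n [ys [gs ->]]] := lmb_tBA H f.
  rewrite (lmap_sum (mul_linr _)) (lmap_sum (tL_lin y)) (lmap_sum (sL_lin x)).
  by apply: P_sum => i; rewrite -tR_mul tL_mul sL_mul; exact: Pgen.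
have P_st_mul x y d e : P (sL x (tL y (mA d e))).
  have [n [xs [gs ->]]] := lmb_sBA H e.
  rewrite (lmap_sum (mul_linr _)) (lmap_sum (tL_lin y)) (lmap_sum (sL_lin x)).
  by apply: P_sum => i; rewrite -sR_mul; exact: P_stt.
have P_st x y c : P (sL x (tL y c)).
  have [n [bs [cs ->]]] := lmb_idemA H c.
  by rewrite (lmap_sum (tL_lin y)) (lmap_sum (sL_lin x)); apply: P_sum => i; exact: P_st_mul.
have P_s x c : P (sL x c).
  have [n [ys [cs ->]]] := lmb_tBA H c.
  by rewrite (lmap_sum (sL_lin x)); apply: P_sum => i; exact: P_st.
by move=> c; have [n [xs [cs ->]]] := lmb_sBA H c; apply: P_sum => i; exact: P_s.
Qed.

Lemma Dact_generator x y y' x' d g u :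
  Dact (mA (sL x (tL y (tR y' (sR x' d)))) g) u ~~
  lmulT (tL y) (sL x) (Dact d (lmulT (tL y') (sL x') (Dact g u))).
Proof. exact: qeq2_trans (lmb_D_mul H _ _ _) (lmb_D_bimod H _ _ _ _ _ _). Qed.

Lemma Dact_tL y c u : Dact (tL y c) u ~~ lmulT (tL y) id (Dact c u).
Proof.
elim/generator_ind: c u => [u|a b IHa IHb u|x y1 y' x' d g u].
- rewrite (lmap0 (tL_lin y)); apply: qeq2_trans (qlinear0 (Dact_qlinear u)) _.
  exact/qeq2_sym/(eqQ_lmulT_tL y (qlinear0 (Dact_qlinear u))).
- rewrite (lmapD (tL_lin y)); apply: qeq2_trans (qlinearD (Dact_qlinear u) _ _) _.
  apply: qeq2_sym; apply: qeq2_trans (eqQ_lmulT_tL y (qlinearD (Dact_qlinear u) _ _)) _.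
  by rewrite /lmulT map_cat; apply: qeq2_cat; apply: qeq2_sym; [exact: IHa|exact: IHb].
- rewrite tL_mul -sL_tL -tL_mulB; apply: qeq2_trans (Dact_generator _ _ _ _ _ _ _) _.
  apply: qeq2_sym; apply: qeq2_trans (eqQ_lmulT_tL y (Dact_generator _ _ _ _ _ _ _)) _.
  by rewrite /lmulT -map_comp; under eq_map => p do rewrite /= -tL_mulB.
Qed.

Lemma Dact_sL x c u : Dact (sL x c) u ~~ lmulT id (sL x) (Dact c u).
Proof.
elim/generator_ind: c u => [u|a b IHa IHb u|x1 y y' x' d g u].
- rewrite (lmap0 (sL_lin x)); apply: qeq2_trans (qlinear0 (Dact_qlinear u)) _.
  exact/qeq2_sym/(eqQ_lmulT_sL x (qlinear0 (Dact_qlinear u))).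
- rewrite (lmapD (sL_lin x)); apply: qeq2_trans (qlinearD (Dact_qlinear u) _ _) _.
  apply: qeq2_sym; apply: qeq2_trans (eqQ_lmulT_sL x (qlinearD (Dact_qlinear u) _ _)) _.
  by rewrite /lmulT map_cat; apply: qeq2_cat; apply: qeq2_sym; [exact: IHa|exact: IHb].
- rewrite sL_mul -sL_mulB; apply: qeq2_trans (Dact_generator _ _ _ _ _ _ _) _.
  apply: qeq2_sym; apply: qeq2_trans (eqQ_lmulT_sL x (Dact_generator _ _ _ _ _ _ _)) _.
  by rewrite /lmulT -map_comp; under eq_map => p do rewrite /= -sL_mulB.
Qed.

Lemma D2_tL y a b : D2 (tL y a) b ~~ lmulT (tL y) id (D2 a b).
Proof.
apply: eqQ_rmul1_cancel => c.
apply: qeq2_trans (qeq2_sym (D1_D2_compat _ _ _)) _; rewrite -Dact1.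
apply: qeq2_trans (Dact_tL _ _ _) _; rewrite Dact1.
apply: qeq2_trans (eqQ_lmulT_tL y (D1_D2_compat _ _ _)) _.
by rewrite /lmulT /Defs.rmul1 -!map_comp; under eq_map => p do rewrite /= tL_mul.
Qed.

Lemma D1_sL x p a : D1 (sL x p) a ~~ lmulT id (sL x) (D1 p a).
Proof.
apply: eqQ_rmul2_cancel => b; rewrite -Dact1.
apply: qeq2_trans (Dact_sL _ _ _) _; rewrite Dact1.
by rewrite /lmulT /Defs.rmul2 -!map_comp; under eq_map => q do rewrite /= sL_mul.
Qed.

Lemma tsum_eqQ (V : lmodType CC) (G : A -> A -> V) u v : bilinear_map G ->
  (forall x a b, G (sL x a) b = G a (tL x b)) -> u ~~ v -> tsum G u = tsum G v.
Proof. by move=> G_bil G_bal; apply: qeq2_tsum => // f f_lin x a b; rewrite G_bal. Qed.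

(* For a bijective canonical map [T] (given on simple tensors by [Tp]) and a
   bilinear map [G] balanced for the domain of [T], [preim_sum G w] is the
   sum of [G] over a [T]-preimage of [w], i.e. [G o T^-1]. *)
Section PreimageSum.
Variables (balX : (A -> A -> CC) -> Prop) (Tp : A -> A -> ftensor A).
Let T (u : ftensor A) := flatten [seq Tp p.1 p.2 | p <- u].
Hypothesis T_bij : qbijective (qeq2 balX) (eqQ sL tL) T.
Hypothesis Tp_qlin : forall b, qlinear (balQ sL tL) (Tp^~ b).
Variable G : A -> A -> A.
Hypothesis G_bil : bilinear_map G.
Hypothesis G_balX : forall f : A -> CC, is_linear_map f -> balX (fun a b => f (G a b)).

Lemma T_surj w : exists u, T u ~~ w.
Proof. by case: T_bij. Qed.

Definition preim w : ftensor A := projT1 (cid (T_surj w)).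
Definition preim_sum w : A := tsum G (preim w).

Lemma T_preim w : T (preim w) ~~ w.
Proof. exact: projT2 (cid (T_surj w)). Qed.

Lemma preim_sumE u w : T u ~~ w -> preim_sum w = tsum G u.
Proof.
move=> Tu_w; apply: (qeq2_tsum G_bil G_balX); case: T_bij => _ T_inj _.
exact/T_inj/(qeq2_trans (T_preim w))/qeq2_sym.
Qed.

Lemma preim_sum_eqQ w w' : w ~~ w' -> preim_sum w = preim_sum w'.
Proof. by move=> ww'; apply: preim_sumE; exact: qeq2_trans (T_preim w') (qeq2_sym ww'). Qed.

Lemma preim_sum_Tp a b : preim_sum (Tp a b) = G a b.
Proof. by rewrite (@preim_sumE [:: (a, b)]) ?tsum1 // /T /= cats0. Qed.

Lemma preim_sum_cat w w' : preim_sum (w ++ w') = preim_sum w + preim_sum w'.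
Proof.
rewrite (@preim_sumE (preim w ++ preim w')) ?tsum_cat //.
by rewrite /T map_cat flatten_cat; apply: qeq2_cat; exact: T_preim.
Qed.

Lemma preim_sum_nil : preim_sum [::] = 0.
Proof. by rewrite (@preim_sumE [::]) ?tsum_nil. Qed.

Lemma preim_sum_tscale k w : preim_sum (tscale k w) = k *: preim_sum w.
Proof.
rewrite (@preim_sumE (tscale k (preim w))) ?tsum_tscale //.
apply: (qeq2_trans (v := tscale k (T (preim w)))); last exact/qeq2_tscale/T_preim.
rewrite /T /tscale map_flatten -!map_comp; apply: qeq2_flatten => p /=.
exact: (qlinearZ (Tp_qlin _)).
Qed.

Definition preim_sum1 a b := preim_sum [:: (a, b)].

Lemma preim_sum_pairs w : preim_sum w = \sum_(p <- w) preim_sum1 p.1 p.2.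
Proof.
elim: w => [|[a b] w IHw]; first by rewrite preim_sum_nil big_nil.
by rewrite big_cons -IHw -preim_sum_cat.
Qed.

Lemma preim_sum1_linl b : is_linear_map (preim_sum1^~ b).
Proof.
move=> k a a'.
by rewrite /preim_sum1 (preim_sum_eqQ (qeq2_linl k a a' b)) preim_sum_cat preim_sum_tscale.
Qed.

Lemma preim_sum1_linr a : is_linear_map (preim_sum1 a).
Proof.
move=> k b b'.
by rewrite /preim_sum1 (preim_sum_eqQ (qeq2_linr k a b b')) preim_sum_cat preim_sum_tscale.
Qed.

Lemma preim_sum1_sL_tL x a b : preim_sum1 (sL x a) b = preim_sum1 a (tL x b).
Proof. exact: preim_sum_eqQ (eqQ_sL_tL _ _ _). Qed.

Lemma balanced_eq_on_Tp (G1 G2 : A -> A -> A) :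
  bilinear_map G1 -> (forall x a b, G1 (sL x a) b = G1 a (tL x b)) ->
  bilinear_map G2 -> (forall x a b, G2 (sL x a) b = G2 a (tL x b)) ->
  (forall a b, tsum G1 (Tp a b) = tsum G2 (Tp a b)) -> forall a b, G1 a b = G2 a b.
Proof.
move=> G1_bil G1_bal G2_bil G2_bal G12 a b; have [u Tu_ab] := T_surj [:: (a, b)].
rewrite -(tsum1 G1) -(tsum1 G2) -(tsum_eqQ G1_bil G1_bal Tu_ab) -(tsum_eqQ G2_bil G2_bal Tu_ab).
by rewrite /T !tsum_flatten !big_map; apply: eq_bigr.
Qed.

End PreimageSum.

Lemma mul_bal_rho f : is_linear_map f -> bal_rho sL sR (fun a b => f (mA a b)).
Proof. by move=> _ x a b; rewrite sR_mul. Qed.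

Lemma mulop_bal_lambda f : is_linear_map f -> bal_lambda tL tR (fun a b => f (mA b a)).
Proof. by move=> _ x a b /=; rewrite tR_mul. Qed.

Definition D1op a b := D1 b a.

Lemma D1op_qlinearl b : qlinear (balQ sL tL) (D1op^~ b).
Proof. exact: D1_qlinearr. Qed.

Section Counit.
Hypothesis HL : qbijective (eq_lambda tL tR) (eqQ sL tL) (T_lambda D1).
Hypothesis HR : qbijective (eq_rho sL sR) (eqQ sL tL) (T_rho D2).

Let HLop : qbijective (eq_lambda tL tR) (eqQ sL tL)
  (fun u => flatten [seq D1op p.1 p.2 | p <- u]) := HL.

Definition E_rho : A -> A -> A := preim_sum1 HR mA.
Definition E_lam : A -> A -> A := preim_sum1 HLop (fun a b => mA b a).

Lemma E_rho_linl b : is_linear_map (E_rho^~ b).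
Proof. exact: (preim_sum1_linl HR D2_qlinearl mul_bilinear mul_bal_rho b). Qed.
Lemma E_rho_linr a : is_linear_map (E_rho a).
Proof. exact: (preim_sum1_linr HR D2_qlinearl mul_bilinear mul_bal_rho a). Qed.
Lemma E_lam_linl b : is_linear_map (E_lam^~ b).
Proof. exact: (preim_sum1_linl HLop D1op_qlinearl mulop_bilinear mulop_bal_lambda b). Qed.
Lemma E_lam_linr a : is_linear_map (E_lam a).
Proof. exact: (preim_sum1_linr HLop D1op_qlinearl mulop_bilinear mulop_bal_lambda a). Qed.
Lemma E_rho_sL_tL x a b : E_rho (sL x a) b = E_rho a (tL x b).
Proof. exact: (preim_sum1_sL_tL HR mul_bilinear mul_bal_rho x a b). Qed.
Lemma E_lam_sL_tL x a b : E_lam (sL x a) b = E_lam a (tL x b).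
Proof. exact: (preim_sum1_sL_tL HLop mulop_bilinear mulop_bal_lambda x a b). Qed.

Lemma E_rhoE u a b : T_rho D2 u ~~ [:: (a, b)] -> E_rho a b = tsum mA u.
Proof. exact: (preim_sumE HR mul_bilinear mul_bal_rho (u := u) (w := [:: (a, b)])). Qed.

Lemma E_lamE u a b :
  T_lambda D1 u ~~ [:: (a, b)] -> E_lam a b = tsum (fun a b => mA b a) u.
Proof. exact: (preim_sumE HLop mulop_bilinear mulop_bal_lambda (u := u) (w := [:: (a, b)])). Qed.

Lemma E_rho_sum_eqQ a b w :
  T_rho D2 [:: (a, b)] ~~ w -> \sum_(q <- w) E_rho q.1 q.2 = mA a b.
Proof.
move=> ab_w; rewrite -(preim_sum_pairs HR mul_bilinear mul_bal_rho).
rewrite -(preim_sum_eqQ HR mul_bilinear mul_bal_rho ab_w).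
by rewrite /T_rho /= cats0 (preim_sum_Tp HR mul_bilinear mul_bal_rho).
Qed.

Lemma E_lam_sum_eqQ a b w :
  T_lambda D1 [:: (a, b)] ~~ w -> \sum_(q <- w) E_lam q.1 q.2 = mA b a.
Proof.
move=> ab_w; rewrite -(preim_sum_pairs HLop mulop_bilinear mulop_bal_lambda).
rewrite -(preim_sum_eqQ HLop mulop_bilinear mulop_bal_lambda ab_w).
by rewrite /T_lambda /= cats0 (preim_sum_Tp HLop mulop_bilinear mulop_bal_lambda).
Qed.

Lemma E_rho_tL y a b : E_rho (tL y a) b = tL y (E_rho a b).
Proof.
have [u Tu] := T_surj HR [:: (a, b)].
rewrite (E_rhoE Tu) (@E_rhoE (lmulT (tL y) id u)).
  rewrite /tsum /lmulT big_map (lmap_sum (tL_lin y)).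
  by apply: eq_bigr => p _ /=; rewrite tL_mul.
apply: (qeq2_trans (v := lmulT (tL y) id (T_rho D2 u))); last exact: (eqQ_lmulT_tL y Tu).
rewrite /T_rho /lmulT map_flatten -!map_comp; apply: qeq2_flatten => p /=.
exact: D2_tL.
Qed.

Lemma E_lam_sL x a b : E_lam a (sL x b) = sL x (E_lam a b).
Proof.
have [u Tu] := T_surj HLop [:: (a, b)].
rewrite (E_lamE Tu) (@E_lamE (lmulT id (sL x) u)).
  rewrite /tsum /lmulT big_map (lmap_sum (sL_lin x)).
  by apply: eq_bigr => p _ /=; rewrite sL_mul.
apply: (qeq2_trans (v := lmulT id (sL x) (T_lambda D1 u))); last exact: (eqQ_lmulT_sL x Tu).
rewrite /T_lambda /lmulT map_flatten -!map_comp; apply: qeq2_flatten => p /=.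
exact: D1_sL.
Qed.

Section Contraction.
Variable G3 : A -> A -> A -> A.
Hypothesis G3_tril : trilinear_map G3.
Hypothesis G3_bal1 : forall x a b c, G3 (sL x a) b c = G3 a (tL x b) c.
Hypothesis G3_bal2 : forall x a b c, G3 a (sL x b) c = G3 a b (tL x c).

Lemma coassoc_tsum a b c :
  \sum_(q <- D2 b c) tsum (fun r1 r2 => G3 r1 r2 q.2) (D1 q.1 a) =
  \sum_(u <- D1 b a) tsum (G3 u.1) (D2 u.2 c).
Proof.
have := qeq3_tsum G3_tril _ (lmb_coassoc H (qeq2_refl (D2 b c)) (qeq2_refl (D1 b a))).
rewrite /tsum3 !big_flatten !big_map.
under eq_bigr => q _ do rewrite big_map.
under [X in _ = X]eq_bigr => u _ do rewrite big_map.
by apply; move=> f _; split=> *; rewrite ?G3_bal1 ?G3_bal2.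
Qed.

Variable G4 : A -> A -> A.
Hypothesis G4_bil : bilinear_map G4.
Hypothesis G4_bal : forall x a b, G4 (sL x a) b = G4 a (tL x b).
Hypothesis G3_D2 : forall a b c, tsum (G3 a) (D2 b c) = G4 a (mA b c).

(* [T_rho] is onto, so it suffices to compare both sides on [D2 b c], where
   coassociativity applies. *)
Lemma coassoc_contract a p e : tsum (fun r1 r2 => G3 r1 r2 e) (D1 p a) = G4 (mA p a) e.
Proof.
have [G3_l1 G3_l2 G3_l3] := G3_tril.
have G3e_bil e' : bilinear_map (fun r1 r2 => G3 r1 r2 e').
  by split=> k *; [rewrite G3_l1 | rewrite G3_l2].
have G3e_bal e' x r1 r2 : G3 (sL x r1) r2 e' = G3 r1 (tL x r2) e' by rewrite G3_bal1.
pose G1 p e := tsum (fun r1 r2 => G3 r1 r2 e) (D1 p a).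
apply: (balanced_eq_on_Tp HR (G1 := G1) (G2 := fun p e => G4 (mA p a) e)).
- split=> k *; rewrite /G1.
    by rewrite (tsum_eqQ (G3e_bil _) (G3e_bal _) (D1_qlinearl _ _ _ _)) tsum_cat tsum_tscale.
  by rewrite /tsum scaler_sumr -big_split; apply: eq_bigr => r _; exact: G3_l3.
- move=> x p' e'; rewrite /G1 (tsum_eqQ (G3e_bil _) (G3e_bal _) (D1_sL _ _ _)) /tsum /lmulT.
  by rewrite big_map; apply: eq_bigr => r _ /=; rewrite G3_bal2.
- by split=> k *; [rewrite (mul_linl a) G4_bil.1 | rewrite G4_bil.2].
- by move=> x p' e'; rewrite -sL_mul G4_bal.
move=> b c; rewrite {1}/tsum coassoc_tsum.
under eq_bigr => u _ do rewrite G3_D2.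
rewrite -(big_map (fun u => (u.1, mA u.2 c)) xpredT (fun u => G4 u.1 u.2)).
by rewrite -/(tsum _ _) (tsum_eqQ G4_bil G4_bal (D1_D2_compat _ _ _)) /tsum big_map.
Qed.

End Contraction.

Lemma E_rho_sum_D2 a b : \sum_(q <- D2 a b) E_rho q.1 q.2 = mA a b.
Proof. by apply: E_rho_sum_eqQ; rewrite /T_rho /= cats0. Qed.

Lemma E_lam_sum_D1 a b : \sum_(q <- D1 b a) E_lam q.1 q.2 = mA b a.
Proof. by apply: E_lam_sum_eqQ; rewrite /T_lambda /= cats0. Qed.

Section RightLinearFunctional.
Variable psi : A -> B.
Hypothesis psi_lin : is_linear_map psi.
Hypothesis psi_tL : forall x a, psi (tL x a) = mB (psi a) x.

Lemma sL_psi_E_rho x y e : sL (psi (E_rho y e)) x = sL (psi e) (E_lam x y).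
Proof.
have sL_psi_lin a : is_linear_map (fun b => sL (psi b) a).
  by move=> k b b'; rewrite psi_lin (sL_linB a).
have G_bal x' a b c : sL (psi (E_rho b c)) (sL x' a) = sL (psi (E_rho (tL x' b) c)) a.
  by rewrite E_rho_tL psi_tL sL_mulB.
have contract a p q :
    tsum (fun r1 r2 => sL (psi (E_rho r2 q)) r1) (D1 p a) = sL (psi q) (mA p a).
  apply: (@coassoc_contract (fun r1 r2 r3 => sL (psi (E_rho r2 r3)) r1) _ _ _
    (fun p q => sL (psi q) p)).
  - by split=> k *; rewrite ?(sL_lin _) ?(E_rho_linl _) ?(E_rho_linr _) ?(sL_psi_lin _).
  - by move=> x' a' b c; rewrite G_bal.
  - by move=> x' a' b c; rewrite E_rho_sL_tL.
  - by split=> k *; [rewrite (sL_lin _) | rewrite (sL_psi_lin _)].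
  - by move=> x' a' b; rewrite psi_tL sL_mulB.
  - move=> u1 u2 c; rewrite -E_rho_sum_D2 (lmap_sum psi_lin) (lmap_sum (sL_linB u1)).
    by [].
apply: (balanced_eq_on_Tp HLop
  (G1 := fun r1 r2 => sL (psi (E_rho r2 e)) r1)
  (G2 := fun r1 r2 => sL (psi e) (E_lam r1 r2))).
- split=> k *; first by rewrite (sL_lin _).
  by rewrite (E_rho_linl _) (sL_psi_lin _).
- by move=> x' a b; rewrite G_bal.
- by split=> k *; [rewrite (E_lam_linl _) (sL_lin _) | rewrite (E_lam_linr _) (sL_lin _)].
- by move=> x' a b; rewrite E_lam_sL_tL.
by move=> a p; rewrite /= contract -E_lam_sum_D1 (lmap_sum (sL_lin _)).
Qed.

End RightLinearFunctional.

Section LeftLinearFunctional.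
Variable phi : A -> B.
Hypothesis phi_lin : is_linear_map phi.
Hypothesis phi_sL : forall x a, phi (sL x a) = mB x (phi a).

Lemma tL_phi_E_rho x y e : tL (phi x) (E_rho y e) = tL (phi (E_lam x y)) e.
Proof.
have tL_phi_lin a : is_linear_map (fun b => tL (phi b) a).
  by move=> k b b'; rewrite phi_lin (tL_linB a).
have G_bal x' a b c : tL (phi (sL x' a)) (E_rho b c) = tL (phi a) (E_rho (tL x' b) c).
  by rewrite phi_sL tL_mulB E_rho_tL.
have contract a p q :
    tsum (fun r1 r2 => tL (phi r1) (E_rho r2 q)) (D1 p a) = tL (phi (mA p a)) q.
  apply: (@coassoc_contract (fun r1 r2 r3 => tL (phi r1) (E_rho r2 r3)) _ _ _
    (fun p q => tL (phi p) q)).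
  - by split=> k *; rewrite ?(tL_phi_lin _) ?(E_rho_linl _) ?(E_rho_linr _) ?(tL_lin _).
  - by move=> x' a' b c; rewrite G_bal.
  - by move=> x' a' b c; rewrite E_rho_sL_tL.
  - by split=> k *; [rewrite (tL_phi_lin _) | rewrite (tL_lin _)].
  - by move=> x' a' b; rewrite phi_sL tL_mulB.
  - by move=> u1 u2 c; rewrite -E_rho_sum_D2 (lmap_sum (tL_lin _)).
apply: (balanced_eq_on_Tp HLop
  (G1 := fun r1 r2 => tL (phi r1) (E_rho r2 e))
  (G2 := fun r1 r2 => tL (phi (E_lam r1 r2)) e)).
- split=> k *; first by rewrite (tL_phi_lin _).
  by rewrite (E_rho_linl _) (tL_lin _).
- by move=> x' a b; rewrite G_bal.
- split=> k *; first by rewrite (E_lam_linl _) (tL_phi_lin _).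
  by rewrite (E_lam_linr _) (tL_phi_lin _).
- by move=> x' a b; rewrite E_lam_sL_tL.
move=> a p; rewrite /= contract -E_lam_sum_D1 (lmap_sum phi_lin).
by rewrite (lmap_sum (tL_linB _)).
Qed.

End LeftLinearFunctional.

Hypothesis HIt : sItA_eq_A mB sL tL.
Hypothesis HIs : tIsA_eq_A mB sL tL.

Lemma E_lam_sL_representable y : exists b, forall x, sL b x = E_lam x y.
Proof.
pose P y := exists b, forall x, sL b x = E_lam x y.
have P0 : P 0 by exists 0 => x; rewrite (lmap0 (sL_linB x)) (lmap0 (E_lam_linr x)).
have PD a b : P a -> P b -> P (a + b).
  move=> [ba Ha] [bb Hb]; exists (ba + bb) => x.
  by rewrite (lmapD (sL_linB x)) Ha Hb (lmapD (E_lam_linr x)).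
have P_sum n (F : 'I_n -> A) : (forall i, P (F i)) -> P (\sum_(i < n) F i).
  by move=> PF; apply: (big_ind P) => // i _.
have [n [ys [bs [ys_It ->]]]] := HIt y; apply: (P_sum) => i.
have [m [psis [as_ [psis_lin [psis_tL ->]]]]] := ys_It i.
rewrite (lmap_sum (sL_linB _)); apply: (P_sum) => j.
exists (psis j (E_rho (bs i) (as_ j))) => x.
by rewrite (sL_psi_E_rho (psis_lin j) (psis_tL j)) E_lam_sL.
Qed.

Definition counit (y : A) : B := projT1 (cid (E_lam_sL_representable y)).

Lemma sL_counit y x : sL (counit y) x = E_lam x y.
Proof. exact: (projT2 (cid (E_lam_sL_representable y)) x). Qed.

Lemma counit_unique b y : (forall x, sL b x = E_lam x y) -> counit y = b.
Proof. by move=> b_y; apply: (lmb_s_inj H) => x; rewrite sL_counit b_y. Qed.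

Lemma counit_lin : is_linear_map counit.
Proof.
by move=> k y y'; apply: counit_unique => x; rewrite (sL_linB x) !sL_counit (E_lam_linr x).
Qed.

Lemma counit_sL x a : counit (sL x a) = mB x (counit a).
Proof. by apply: counit_unique => x'; rewrite sL_mulB sL_counit E_lam_sL. Qed.

Lemma counit_tL y a : counit (tL y a) = mB (counit a) y.
Proof. by apply: counit_unique => x'; rewrite sL_mulB sL_counit E_lam_sL_tL. Qed.

Lemma tL_phi_E_rho_counit (phi : A -> B) x y q :
  is_linear_map phi -> (forall x a, phi (sL x a) = mB x (phi a)) ->
  tL (phi x) (E_rho y q) = tL (phi x) (tL (counit y) q).
Proof.
move=> phi_lin phi_sL.
by rewrite (tL_phi_E_rho phi_lin phi_sL) -sL_counit phi_sL tL_mulB.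
Qed.

Lemma E_rho_counit y q : E_rho y q = tL (counit y) q.
Proof.
have [n [ys [bs [ys_Is ->]]]] := HIs y.
rewrite (lmap_sum (E_rho_linl q)) (lmap_sum counit_lin) (lmap_sum (tL_linB q)).
apply: eq_bigr => i _; rewrite E_rho_tL counit_tL tL_mulB.
have [m [phis [as_ [phis_lin [phis_sL ->]]]]] := ys_Is i.
rewrite !(lmap_sum (tL_linB _)); apply: eq_bigr => j _.
exact: tL_phi_E_rho_counit.
Qed.

Lemma counit_left_counit : left_counit mA mB sL tL D1 D2 counit.
Proof.
split.
- exact: counit_lin.
- exact: counit_sL.
- exact: counit_tL.
- move=> a b w ab_w; rewrite -(E_rho_sum_eqQ ab_w).
  by apply: eq_bigr => q _; rewrite E_rho_counit.
- move=> a b w ab_w; rewrite -(E_lam_sum_eqQ ab_w).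
  by apply: eq_bigr => q _; rewrite sL_counit.
Qed.

Lemma left_counit_tL (eps : A -> B) c d :
  left_counit mA mB sL tL D1 D2 eps -> tL (eps c) d = E_rho c d.
Proof.
case=> eps_lin eps_sL _ eps_Trho _.
have [u Tu] := T_surj HR [:: (c, d)].
have G_bil : bilinear_map (fun p q => tL (eps p) q).
  by split=> k *; [rewrite eps_lin (tL_linB _) | rewrite (tL_lin _)].
have G_bal x a b : tL (eps (sL x a)) b = tL (eps a) (tL x b) by rewrite eps_sL tL_mulB.
rewrite (E_rhoE Tu) -(tsum1 (fun p q => tL (eps p) q)) -(tsum_eqQ G_bil G_bal Tu).
rewrite /T_rho tsum_flatten big_map; apply: eq_bigr => p _.
by apply: eps_Trho; rewrite /T_rho /= cats0.
Qed.

End Counit.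
End Bialgebroid.

Theorem proposition3p9 (A B : lmodType CC) (mA : A -> A -> A) (mB : B -> B -> B)
    (sL sR tL tR : B -> A -> A) (D1 D2 : A -> A -> ftensor A) :
  left_multiplier_bialgebroid mA mB sL sR tL tR D1 D2 ->
  qbijective (eq_lambda tL tR) (eqQ sL tL) (T_lambda D1) ->
  qbijective (eq_rho sL sR) (eqQ sL tL) (T_rho D2) ->
  sItA_eq_A mB sL tL ->
  tIsA_eq_A mB sL tL ->
  exists eps : A -> B,
    left_counit mA mB sL tL D1 D2 eps /\
    forall eps' : A -> B, left_counit mA mB sL tL D1 D2 eps' -> forall a, eps' a = eps a.
Proof.
move=> H HL HR HIt HIs.
have counit_ok := counit_left_counit H HL HR HIt HIs.
exists (counit H HL HR HIt); split=> // eps' eps'_counit a.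
apply: (lmb_t_inj H) => d.
by rewrite (left_counit_tL H HR _ _ eps'_counit) (left_counit_tL H HR _ _ counit_ok).
Qed.
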